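(* Let $\mathcal{M}=(S,\boldsymbol{\pi},\mathbf{R})$ be a labelled continuous-time Markov chain, $\Phi_1,\Phi_2$ CSL state formulae, $I\subseteq\mathbb{R}_{\ge0}$ an interval, and let $S_X$ and $S_O$ be the exclude-from-refinement and once-only sets for $\Phi_1U^I\Phi_2$ (defined in the context). Let $T=\langle s_{i1},s_{i2},\ldots,s_{iN_i}\rangle$ be one of the sequences returned by the procedure TogetherSeqs applied to $(\mathcal{M},S_X,S_O)$. Let $\omega$ be a path satisfying $\Phi_1U^I\Phi_2$ and let $t\in I$ be the earliest time with $\omega@t\models\Phi_2$ (and $\omega@t'\models\Phi_1$ for all $t'\in[0,t)$). Then up to time $t$, the states of $T$ can appear on $\omega$ only as complete consecutive blocks $\ldots s_{i1}t_{i1}s_{i2}t_{i2}\ldots s_{iN_i}t_{iN_i}\ldots$.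
   Context: A CTMC $(S,\boldsymbol{\pi},\mathbf{R})$ has finite state set, initial distribution $\boldsymbol{\pi}$ and rate matrix $\mathbf{R}$; paths $\omega=s_1t_1s_2t_2\ldots$ have $\boldsymbol{\pi}(s_1)>0$, $\mathbf{R}(s_i,s_{i+1})>0$, $t_i>0$ the sojourn time, $\omega@t$ the state at time $t$. $\omega\models\Phi_1U^I\Phi_2$ iff $\exists t\in I$ with $\omega@t\models\Phi_2$ and $\omega@t'\models\Phi_1$ for $t'\in[0,t)$; $U$ alone means $I=[0,\infty)$; $P_{=?}[\Psi]$ is the probability of $\Psi$ under the initial distribution. For each state $s$ an atomic proposition $s$ holds exactly in $s$. $S_X=\{s\in S\mid P_{=?}[(\neg s\wedge\Phi_1)U\Phi_2]=P_{=?}[\Phi_1U\Phi_2]\}$. $S_O$ is the set of $s\in S\setminus S_X$ with $P_{=?}[\Phi_1U\Phi_2]>0$, $P_{=?}[(\neg s\wedge\Phi_1)U\Phi_2]=0$, and such that for every $s'$ reachable from $s$ in one step with positive probability, the probability from $s'$ of reaching $s$ without passing through $S_X$ is $0$. Procedure TogetherSeqs: set $States:=S\setminus(S_X\cup S_O)$ and $TS:=\emptyset$. While $States\ne\emptyset$: pick any $s\in States$, set $T:=\langle s\rangle$, remove $s$ from $States$; then repeatedly (while at least one direction is still open and $States\ne\emptyset$) try to extend $T$ to the left by $\mathrm{Pred}(\mathrm{head}(T))$ and to the right by $\mathrm{Succ}(\mathrm{tail}(T))$, removing each added state from $States$ and closing a direction once its function returns NIL; finally add $T$ to $TS$. Return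 $TS$. Here $\mathrm{Pred}(s)$ returns NIL if $\boldsymbol{\pi}(s)>0$, and otherwise returns some $s'\in States$ with $\mathbf{R}(s',s)>0$ and $\mathbf{R}(s',s'')=\mathbf{R}(s'',s)=0$ for all $s''\in S\setminus\{s,s'\}$, or NIL if none exists; $\mathrm{Succ}(s)$ returns some $s'\in States$ with $\boldsymbol{\pi}(s')=0$, $\mathbf{R}(s,s')>0$ and $\mathbf{R}(s,s'')=\mathbf{R}(s'',s')=0$ for all $s''\in S\setminus\{s,s'\}$, or NIL if none exists. *)

From mathcomp Require Import all_boot all_order all_algebra.
From mathcomp Require Import boolp classical_sets reals.
Set Implicit Arguments. Unset Strict Implicit. Unset Printing Implicit Defensive.
Import Order.TTheory GRing.Theory Num.Theory.
Local Open Scope ring_scope.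
Local Open Scope classical_set_scope.

Section CTMC.
Variables (R : realType) (S : finType).

Record ctmc := CTMC { init : S -> R ; rate : S -> S -> R }.

Definition is_ctmc (M : ctmc) : Prop :=
  [/\ forall s, 0 <= init M s, \sum_(s : S) init M s = 1
    & forall s s', 0 <= rate M s s'].

Definition exit_rate (M : ctmc) (s : S) : R := \sum_(s' : S) rate M s s'.
Definition emb (M : ctmc) (s s' : S) : R :=
  if exit_rate M s == 0 then 0 else rate M s s' / exit_rate M s.

Fixpoint reachn (M : ctmc) (Phi1 Phi2 : pred S) (n : nat) (s : S) : R :=
  if Phi2 s then 1 else
  match n with
  | 0 => 0
  | n'.+1 => if Phi1 s then \sum_(s' : S) emb M s s' * reachn M Phi1 Phi2 n' s'
             else 0
  end.

(** Probability of the unbounded until Phi1 U Phi2 from state s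
    (= probability in the embedded DTMC; supremum of the step-bounded ones). *)
Definition prob_from (M : ctmc) (Phi1 Phi2 : pred S) (s : S) : R :=
  sup (range (fun n => reachn M Phi1 Phi2 n s)).

Definition prob (M : ctmc) (Phi1 Phi2 : pred S) : R :=
  \sum_(s : S) init M s * prob_from M Phi1 Phi2 s.

Definition SX (M : ctmc) (Phi1 Phi2 : pred S) : {set S} :=
  [set s | prob M [pred x | (x != s) && Phi1 x] Phi2 == prob M Phi1 Phi2].

Definition SO (M : ctmc) (Phi1 Phi2 : pred S) : {set S} :=
  [set s | [&& s \notin SX M Phi1 Phi2,
              0 < prob M Phi1 Phi2,
              prob M [pred x | (x != s) && Phi1 x] Phi2 == 0 &
              [forall s', (0 < rate M s s') ==>
                 (prob_from M [pred x | x \notin SX M Phi1 Phi2] (pred1 s) s' == 0)]]].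

Definition pred_cand (M : ctmc) (St : {set S}) (s s' : S) : Prop :=
  [/\ s' \in St, 0 < rate M s' s &
      forall s'', s'' != s -> s'' != s' -> rate M s' s'' = 0 /\ rate M s'' s = 0].

Definition pred_res (M : ctmc) (St : {set S}) (s : S) (r : option S) : Prop :=
  match r with
  | None => 0 < init M s \/ ~ (exists s', pred_cand M St s s')
  | Some s' => ~ (0 < init M s) /\ pred_cand M St s s'
  end.

Definition succ_cand (M : ctmc) (St : {set S}) (s s' : S) : Prop :=
  [/\ s' \in St, init M s' = 0, 0 < rate M s s' &
      forall s'', s'' != s -> s'' != s' -> rate M s s'' = 0 /\ rate M s'' s' = 0].

Definition succ_res (M : ctmc) (St : {set S}) (s : S) (r : option S) : Prop :=
  match r with
  | None => ~ (exists s', succ_cand M St s s')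
  | Some s' => succ_cand M St s s'
  end.

Inductive left_step (M : ctmc) :
    {set S} -> seq S -> bool -> {set S} -> seq S -> bool -> Prop :=
| ls_closed St T : left_step M St T false St T false
| ls_nil St x T : pred_res M St x None ->
    left_step M St (x :: T) true St (x :: T) false
| ls_some St x T s' : pred_res M St x (Some s') ->
    left_step M St (x :: T) true (St :\ s') (s' :: x :: T) true.

Inductive right_step (M : ctmc) :
    {set S} -> seq S -> bool -> {set S} -> seq S -> bool -> Prop :=
| rs_closed St T : right_step M St T false St T false
| rs_nil St x T : succ_res M St (last x T) None ->
    right_step M St (x :: T) true St (x :: T) false
| rs_some St x T s' : succ_res M St (last x T) (Some s') ->
    right_step M St (x :: T) true (St :\ s') (rcons (x :: T) s') true.

(** inner loop: grow M St T lo ro St' T' : starting from States = St, current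
    sequence T and open directions lo/ro, the loop may end with States = St'
    and sequence T' *)
Inductive grow (M : ctmc) :
    {set S} -> seq S -> bool -> bool -> {set S} -> seq S -> Prop :=
| grow_stop St T lo ro : ~~ (lo || ro) || (St == finset.set0) ->
    grow M St T lo ro St T
| grow_step St T lo ro St1 T1 lo1 St2 T2 ro2 St' T' :
    lo || ro -> St != finset.set0 ->
    left_step M St T lo St1 T1 lo1 ->
    right_step M St1 T1 ro St2 T2 ro2 ->
    grow M St2 T2 lo1 ro2 St' T' ->
    grow M St T lo ro St' T'.

Inductive together_loop (M : ctmc) :
    {set S} -> seq (seq S) -> seq (seq S) -> Prop :=
| tl_done TS : together_loop M finset.set0 TS TS
| tl_step (St : {set S}) TS s St' T TS' : s \in St ->
    grow M (St :\ s) [:: s] true true St' T ->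
    together_loop M St' (rcons TS T) TS' ->
    together_loop M St TS TS'.

Definition TogetherSeqs (M : ctmc) (SX SO : {set S}) (TS : seq (seq S)) : Prop :=
  together_loop M (~: (SX :|: SO)) [::] TS.

(** A path s_1 t_1 s_2 t_2 ...; a sojourn time None means t = infinity
    (finite path ending in an absorbing state; later entries irrelevant). *)
Record cpath := CPath { pst : nat -> S ; psj : nat -> option R }.

Definition is_path (M : ctmc) (w : cpath) : Prop :=
  0 < init M (pst w 0) /\
  forall i, (forall j, (j < i)%N -> psj w j != None) ->
    match psj w i with
    | Some r => 0 < r /\ 0 < rate M (pst w i) (pst w i.+1)
    | None => forall s', rate M (pst w i) s' = 0
    end.

Definition entry (w : cpath) (k : nat) : R := \sum_(j < k) odflt 0 (psj w j).

Definition at_time (w : cpath) (u : R) (s : S) : Prop :=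
  exists k, [/\ forall j, (j < k)%N -> psj w j != None,
               entry w k <= u,
               (match psj w k with Some r => u < entry w k + r | None => True end)
             & pst w k = s].

Definition sat_at (w : cpath) (u : R) (Phi : pred S) : Prop :=
  exists s, at_time w u s /\ Phi s.

Definition until_sat (w : cpath) (Phi1 Phi2 : pred S) (I : set R) : Prop :=
  exists t, [/\ I t, sat_at w t Phi2 &
                forall t', 0 <= t' < t -> sat_at w t' Phi1].

Definition nonneg_interval (I : set R) : Prop :=
  (forall x, I x -> 0 <= x) /\
  (forall x y z, I x -> I z -> x <= y -> y <= z -> I y).

End CTMC.

From mathcomp Require Import all_boot all_order all_algebra.
From mathcomp Require Import boolp classical_sets reals.
Set Implicit Arguments. Unset Strict Implicit. Unset Printing Implicit Defensive.
Import Order.TTheory GRing.Theory Num.Theory.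
Local Open Scope ring_scope.
Local Open Scope classical_set_scope.

(* Pred and Succ only join consecutive states x, y of a sequence T when every
   transition out of x other than to y, and every transition into y other than
   from x, has rate 0, and y is not initial.  So a path that is in T_j, j > 0,
   must have come from T_j or T_(j-1), and from T_j it can only move to T_j or
   T_(j+1); by induction the visit to T is a run through all of T in order, each
   state held for a block of consecutive jumps (self-loops allowed).
   It cannot be cut short by time t: the state at t satisfies Phi2, hence lies in
   S_X, while TogetherSeqs only collects states outside S_X. *)

Lemma incn_prefix d (T : porderType d) (f : nat -> T) n :
  (forall i, (i < n)%N -> (f i < f i.+1)%O) ->
  {in [pred i | (i <= n)%N] &, {mono f : i j / (i <= j)%N >-> (i <= j)%O}}.
Proof.
move=> f_inc; apply: Order.NatMonotonyTheory.incn_inP => [i j _ jn k /andP[_]|i _].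
  by move/ltnW/leq_trans; apply.
exact: f_inc.
Qed.

Lemma step_crossing d (T : orderType d) (f : nat -> T) v a b :
  (a < b)%N -> (f a <= v < f b)%O -> exists2 q, (a <= q < b)%N & (f q <= v < f q.+1)%O.
Proof.
elim: b => [|b IH] //; rewrite ltnS => ab /andP[fav vfb].
have [fbv|vfb'] := leP (f b) v; first by exists b; rewrite ?ab ?ltnSn ?fbv.
move: ab; rewrite leq_eqVlt => /predU1P[eab|ab].
  by have := le_lt_trans fav vfb'; rewrite eab ltxx.
have [q /andP[aq qb] fq] := IH ab (introT andP (conj fav vfb')).
by exists q; rewrite // aq ltnS ltnW.
Qed.

Section Blocks.
Variables (S : eqType) (step : rel S) (p : nat -> S) (T : seq S) (x0 : S).

Definition exclusive_edge (x y : S) :=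
  forall z, (step x z -> z = x \/ z = y) /\ (step z y -> z = x \/ z = y).

Definition run (x : S) (a b : nat) := forall q, (a <= q < b)%N -> p q = x.

Definition blocks (c : nat -> nat) (n : nat) :=
  forall m, (m < n)%N -> (c m < c m.+1)%N /\ run (nth x0 T m) (c m) (c m.+1).

Lemma run1 x i : p i = x -> run x i i.+1.
Proof. by move=> pi q; rewrite ltnS -eqn_leq => /eqP<-. Qed.

Lemma runS x a b : run x a b -> p b = x -> run x a b.+1.
Proof.
move=> r_ab pb q /andP[aq]; rewrite ltnS leq_eqVlt => /orP[/eqP-> //|qb].
by apply: r_ab; rewrite aq qb.
Qed.

Lemma blocks_rcons c n b : blocks c n -> (c n < b)%N -> run (nth x0 T n) (c n) b ->
  blocks [eta c with n.+1 |-> b] n.+1.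
Proof.
move=> bc cnb r m; rewrite ltnS leq_eqVlt => /orP[/eqP-> /=|mn /=].
  by rewrite eqxx ltn_eqF.
by rewrite eqSS !ltn_eqF ?leqW //; apply: bc.
Qed.

Lemma blocks_mono c n : blocks c n ->
  {in [pred m | (m <= n)%N] &, {mono c : i j / (i <= j)%N}}.
Proof.
by move=> bc; exact: (@incn_prefix _ nat c n (fun m mn => (bc m mn).1)).
Qed.

Variable K : nat.
Hypothesis p_step : forall i, (i < K)%N -> step (p i) (p i.+1).
Hypothesis T_exclusive :
  forall m, (m.+1 < size T)%N -> exclusive_edge (nth x0 T m) (nth x0 T m.+1).

Lemma blocks_before i j : p 0 \notin behead T -> (i <= K)%N -> (j < size T)%N ->
  p i = nth x0 T j ->
  exists c, [/\ blocks c j, (c j <= i)%N & run (nth x0 T j) (c j) i.+1].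
Proof.
move=> p0T; elim: i j => [|i IH] [|j] iK jT pij.
- by exists (fun=> 0%N); split=> //; apply: run1.
- by move: p0T; rewrite pij -nth_behead mem_nth // size_behead ltn_predRL.
- by exists (fun=> i.+1); split=> //; apply: run1.
have [_ into] := T_exclusive jT (p i).
have := p_step iK; rewrite pij => /into[pi|pi].
  have [c [bc cj r]] := IH j (ltnW iK) (ltnW jT) pi.
  exists [eta c with j.+1 |-> i.+1]; rewrite /= eqxx; split=> //.
  - exact: blocks_rcons.
  - exact: run1.
have [c [bc cj r]] := IH j.+1 (ltnW iK) jT pi.
by exists c; split=> //; [apply: leqW | apply: runS].
Qed.

Lemma blocks_after i j c : p K \notin T -> (i < K)%N -> (j < size T)%N ->
  blocks c j -> (c j <= i)%N -> run (nth x0 T j) (c j) i.+1 ->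
  exists c', [/\ blocks c' (size T), c' 0 = c 0, (i < c' (size T))%N
               & (c' (size T) <= K)%N].
Proof.
move=> pKT; have [n] := ubnP (K - i); elim: n => // n IH in i j c *.
rewrite ltnS => Kin iK jT bc cji r.
have pi : p i = nth x0 T j by apply: r; rewrite cji ltnSn.
have bc1 := blocks_rcons bc (cji : (c j < i.+1)%N) r.
have [jT1|] := ltnP j.+1 (size T); last first.
  rewrite leq_eqVlt ltnNge jT orbF => /eqP ->.
  by exists [eta c with j.+1 |-> i.+1]; rewrite /= eqxx.
have Kin1 : (K - i.+1 < n)%N by rewrite subnS -ltnS prednK // subn_gt0.
have [out _] := T_exclusive jT1 (p i.+1).
have := p_step iK; rewrite pi => /out pi1.
have iK1 : (i.+1 < K)%N.
  rewrite ltn_neqAle iK andbT; apply: contraNneq pKT => <-.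
  by case: pi1 => ->; rewrite mem_nth // ltnW.
case: pi1 => pi1.
  have [c' [bc' c'0 ic' c'K]] := IH i.+1 j c Kin1 iK1 jT bc (leqW cji) (runS r pi1).
  by exists c'; split=> //; apply: ltnW.
have := IH i.+1 j.+1 _ Kin1 iK1 jT1 bc1; rewrite /= eqxx.
move=> /(_ (leqnn _) (run1 pi1)) [c' [bc' c'0 ic' c'K]].
by exists c'; split=> //; apply: ltnW.
Qed.

Lemma path_blocks k : p 0 \notin behead T -> p K \notin T -> (k < K)%N -> p k \in T ->
  exists c, [/\ blocks c (size T), (c 0 <= k)%N, (k < c (size T))%N
              & (c (size T) <= K)%N].
Proof.
move=> p0T pKT kK kT; have jT : (index (p k) T < size T)%N by rewrite index_mem.
have [c [bc cj r]] := blocks_before p0T (ltnW kK) jT (esym (nth_index x0 kT)).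
have [c' [bc' c'0 kc' c'K]] := blocks_after pKT kK jT bc cj r.
exists c'; split=> //; rewrite c'0 (leq_trans _ cj) //.
by rewrite (blocks_mono bc) ?inE.
Qed.

End Blocks.

Section Ctmc.
Variables (R : realType) (S : finType) (M : ctmc R S).

Lemma eq_reachn (Phi1 Phi1' Phi2 : pred S) :
  (forall x, ~~ Phi2 x -> Phi1 x = Phi1' x) ->
  forall n, reachn M Phi1 Phi2 n =1 reachn M Phi1' Phi2 n.
Proof.
move=> eq_Phi1; elim=> [|n IH] x /=; case: ifP => // /negbT/eq_Phi1 ->.
by case: ifP => // _; apply: eq_bigr => y _; rewrite IH.
Qed.

Lemma eq_prob (Phi1 Phi1' Phi2 : pred S) :
  (forall x, ~~ Phi2 x -> Phi1 x = Phi1' x) -> prob M Phi1 Phi2 = prob M Phi1' Phi2.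
Proof.
move=> eq_Phi1; apply: eq_bigr => s _; rewrite /prob_from.
suff -> : (fun n => reachn M Phi1 Phi2 n s) = (fun n => reachn M Phi1' Phi2 n s) by [].
by apply: funext => n; apply: eq_reachn.
Qed.

Lemma Phi2_sub_SX (Phi1 Phi2 : pred S) : {subset Phi2 <= SX M Phi1 Phi2}.
Proof.
move=> s Phi2s; rewrite inE (@eq_prob _ Phi1) // => x Phi2x /=.
by have -> : x != s by apply: contraNneq Phi2x => ->.
Qed.

(* The link that Pred and Succ establish between consecutive states of a sequence. *)
Definition funnel (x y : S) :=
  (init M y == 0) &&
  [forall z, (z != x) && (z != y) ==> (rate M x z == 0) && (rate M z y == 0)].

Lemma funnelP x y :
  reflect (init M y = 0 /\
           forall z, z != x -> z != y -> rate M x z = 0 /\ rate M z y = 0)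
          (funnel x y).
Proof.
apply: (iffP andP) => [[/eqP-> /forallP Hz]|[-> Hz]]; split=> //.
  move=> z zx zy; move/implyP: (Hz z); rewrite zx zy.
  by move=> /(_ isT) /andP[/eqP-> /eqP->].
apply/forallP => z; apply/implyP => /andP[zx zy].
by have [-> ->] := Hz z zx zy; rewrite eqxx.
Qed.

Lemma funnel_exclusive x y :
  funnel x y -> exclusive_edge [rel a b | 0 < rate M a b] x y.
Proof.
move=> /funnelP[_ Hz] z.
have [->|zx] := eqVneq z x; first by split; left.
have [->|zy] := eqVneq z y; first by split; right.
by have [/= -> ->] := Hz z zx zy; rewrite ltxx.
Qed.

Lemma init_notin_behead T x : sorted funnel T -> 0 < init M x -> x \notin behead T.
Proof.
move=> /(sortedP x) chain x0; apply/negP => /(nthP x) [m].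
rewrite size_behead ltn_predRL nth_behead => /chain /funnelP[+ _] xm.
by rewrite xm => x_0; rewrite x_0 ltxx in x0.
Qed.

Section Together.
Variable A : {set S}.
Hypothesis init_ge0 : forall s, 0 <= init M s.

Definition chain_in (T : seq S) := sorted funnel T /\ {subset T <= A}.

Lemma left_step_chain St T lo St' T' lo' : left_step M St T lo St' T' lo' ->
  {subset St <= A} -> chain_in T -> {subset St' <= A} /\ chain_in T'.
Proof.
case=> // {}St x {}T s' [x_init [s'St _ Hz]] StA [Tsorted TA].
split; first by move=> z /setD1P[_ /StA].
split; last by move=> z; rewrite inE => /predU1P[->|/TA //]; apply: StA.
apply/andP; split=> //; apply/funnelP; split; last by move=> z zs' zx; apply: Hz.
by move: (init_ge0 x); rewrite le_eqVlt => /orP[/eqP <-|/x_init].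
Qed.

Lemma right_step_chain St T ro St' T' ro' : right_step M St T ro St' T' ro' ->
  {subset St <= A} -> chain_in T -> {subset St' <= A} /\ chain_in T'.
Proof.
case=> // {}St x {}T s' [s'St s'_init _ Hz] StA [Tsorted TA].
split; first by move=> z /setD1P[_ /StA].
split; last by move=> z; rewrite mem_rcons inE => /predU1P[->|/TA //]; apply: StA.
by rewrite /= rcons_path; apply/andP; split=> //; apply/funnelP.
Qed.

Lemma grow_chain St T lo ro St' T' : grow M St T lo ro St' T' ->
  {subset St <= A} -> chain_in T -> {subset St' <= A} /\ chain_in T'.
Proof.
elim=> // {}St {}T lo' ro' St1 T1 lo1 St2 T2 ro2 {}St' {}T' _ _ ls rs _ IH StA Tch.
have [St1A T1ch] := left_step_chain ls StA Tch.
have [St2A T2ch] := right_step_chain rs St1A T1ch.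
exact: IH.
Qed.

Lemma together_loop_chain St TS TS' : together_loop M St TS TS' ->
  {subset St <= A} -> {in TS, forall T, chain_in T} -> {in TS', forall T, chain_in T}.
Proof.
elim=> // {}St {}TS s {}St' T {}TS' sSt g _ IH StA TSch.
have [St'A Tch] : {subset St' <= A} /\ chain_in T.
  apply: (grow_chain g); first by move=> z /setD1P[_ /StA].
  by split=> // z; rewrite inE => /eqP->; apply: StA.
by apply: IH => // T0; rewrite mem_rcons inE => /predU1P[->|/TSch].
Qed.

End Together.

Lemma sorted_funnel_exclusive T x0 : sorted funnel T ->
  forall m, (m.+1 < size T)%N ->
  exclusive_edge [rel a b | 0 < rate M a b] (nth x0 T m) (nth x0 T m.+1).
Proof. by move=> /(sortedP x0) chain m /chain/funnel_exclusive. Qed.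

Lemma TogetherSeqs_chain Phi1 Phi2 TS T : is_ctmc M ->
  TogetherSeqs M (SX M Phi1 Phi2) (SO M Phi1 Phi2) TS -> T \in TS ->
  chain_in (~: (SX M Phi1 Phi2 :|: SO M Phi1 Phi2)) T.
Proof. by case=> init_ge0 _ _ /together_loop_chain; apply. Qed.
End Ctmc.

Section Timed.
Variables (R : realType) (S : finType) (M : ctmc R S) (w : cpath R S).
Hypothesis w_path : is_path M w.

Definition finite_upto n := forall j, (j < n)%N -> psj w j != None.

Lemma finite_upto_leq m n : finite_upto n -> (m <= n)%N -> finite_upto m.
Proof. by move=> fin mn j jm; apply: fin; apply: leq_trans mn. Qed.

Lemma entryS k r : psj w k = Some r -> entry w k.+1 = entry w k + r.
Proof. by move=> wk; rewrite /entry big_ord_recr /= wk. Qed.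

Lemma sojourn_pos n j : finite_upto n -> (j < n)%N ->
  exists2 r, psj w j = Some r & 0 < r.
Proof.
move=> fin jn; have := w_path.2 j (finite_upto_leq fin (ltnW jn)).
by case: (psj w j) (fin j jn) => // r _ [r0 _]; exists r.
Qed.

Lemma rate_step_gt0 n : finite_upto n ->
  forall i, (i < n)%N -> 0 < rate M (pst w i) (pst w i.+1).
Proof.
move=> fin i iN; have := w_path.2 i (finite_upto_leq fin (ltnW iN)).
by have [r -> _] := sojourn_pos fin iN; case.
Qed.

Lemma entry_mono n : finite_upto n ->
  {in [pred i | (i <= n)%N] &, {mono entry w : i j / (i <= j)%N >-> i <= j}}.
Proof.
move=> fin; apply: incn_prefix => i iN.
by have [r wi r0] := sojourn_pos fin iN; rewrite (entryS wi) ltrDl.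
Qed.

Lemma entry_le n i j : finite_upto n -> (i <= j)%N -> (j <= n)%N ->
  entry w i <= entry w j.
Proof. by move=> fin ij jn; rewrite (entry_mono fin) ?inE ?(leq_trans ij). Qed.

Lemma entry_lt n i j : finite_upto n -> (i < j)%N -> (j <= n)%N ->
  entry w i < entry w j.
Proof.
by move=> fin ij jn; rewrite (leW_mono_in (entry_mono fin)) ?inE ?(leq_trans (ltnW ij)).
Qed.

Lemma entry_ge0 n i : finite_upto n -> (i <= n)%N -> 0 <= entry w i.
Proof.
by move=> fin iN; have := entry_le fin (leq0n i) iN; rewrite {1}/entry big_ord0.
Qed.

Lemma at_time_entry q v : finite_upto q.+1 -> entry w q <= v < entry w q.+1 ->
  at_time w v (pst w q).
Proof.
move=> fin /andP[qv vq]; have [r wq _] := sojourn_pos fin (ltnSn q).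
exists q; split=> //; first exact: finite_upto_leq fin (leqnSn q).
by rewrite wq -(entryS wq).
Qed.

Lemma sojourn_index_mono k K u t : finite_upto k -> entry w k <= u ->
  (match psj w K with Some r => t < entry w K + r | None => True end : Prop) ->
  u < t -> (k <= K)%N.
Proof.
move=> fin ku Kt ut; rewrite leqNgt; apply/negP => Kk.
have [r wK _] := sojourn_pos fin Kk; move: Kt; rewrite wK -(entryS wK).
apply/negP; rewrite -leNgt (le_trans (entry_le fin Kk (leqnn k))) //.
by rewrite (le_trans ku) // ltW.
Qed.

Lemma timed_blocks n T x0 c N : finite_upto n -> blocks (pst w) T x0 c N ->
  (c N <= n)%N -> forall m, (m < N)%N ->
  entry w (c m) < entry w (c m.+1) /\
  forall v, entry w (c m) <= v < entry w (c m.+1) -> at_time w v (nth x0 T m).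
Proof.
move=> fin bc cN m mN; have [cm run_m] := bc m mN.
have cmn : (c m.+1 <= n)%N by apply: leq_trans cN; rewrite (blocks_mono bc) ?inE.
split=> [|v /(step_crossing cm) [q /andP[cq qc] qv]]; first exact: entry_lt fin cm cmn.
rewrite -(run_m q) ?cq //; apply: at_time_entry qv.
exact: finite_upto_leq fin (leq_trans qc cmn).
Qed.

End Timed.

Unset Implicit Arguments. Set Strict Implicit.

Theorem theorem3 (R : realType) (S : finType) (M : ctmc R S)
    (Phi1 Phi2 : pred S) (I : set R) (TS : seq (seq S)) (T : seq S)
    (w : cpath R S) (t : R) :
  is_ctmc M ->
  nonneg_interval I ->
  TogetherSeqs M (SX M Phi1 Phi2) (SO M Phi1 Phi2) TS ->
  T \in TS ->
  is_path M w ->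
  until_sat w Phi1 Phi2 I ->
  (* t is the earliest witness time of Phi1 U^I Phi2 on w *)
  I t -> sat_at w t Phi2 -> (forall t', 0 <= t' < t -> sat_at w t' Phi1) ->
  (forall t'', I t'' -> sat_at w t'' Phi2 ->
     (forall t', 0 <= t' < t'' -> sat_at w t' Phi1) -> t <= t'') ->
  (* up to time t, states of T only occur inside complete consecutive blocks
     s_i1 t_i1 s_i2 t_i2 ... s_iN t_iN *)
  forall (u : R) (s : S), 0 <= u < t -> at_time w u s -> s \in T ->
  exists a : nat -> R,
    [/\ 0 <= a 0%N, a 0%N <= u, u < a (size T), a (size T) <= t &
        forall j, (j < size T)%N ->
          a j < a j.+1 /\
          forall v, a j <= v < a j.+1 -> at_time w v (nth s T j)].
Proof.
move=> M_ctmc _ TS_M T_TS w_path _ _ [_ [[K [finK eK tK <-]] Phi2K]] _ _ u s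
  /andP[_ ut] [k [fink ek uk ks]] kT; rewrite -ks in kT.
have [Tsorted TA] := TogetherSeqs_chain M_ctmc TS_M T_TS.
have KT : pst w K \notin T.
  apply: contraL (Phi2_sub_SX M Phi1 Phi2K) => /TA.
  by rewrite !inE negb_or => /andP[].
have kK : (k < K)%N.
  rewrite ltn_neqAle (sojourn_index_mono w_path fink ek tK ut) andbT.
  by apply: contraNneq KT => <-.
have [c [bc c0k kc cK]] :=
  path_blocks (rate_step_gt0 w_path finK) (sorted_funnel_exclusive s Tsorted)
    (init_notin_behead Tsorted w_path.1) KT kK kT.
have [r wk _] := sojourn_pos w_path finK kK.
move: uk; rewrite wk -(entryS wk) => uk.
exists (fun m => entry w (c m)); split=> /=.
- exact: (entry_ge0 w_path finK (leq_trans c0k (ltnW kK))).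
- exact: (le_trans (entry_le w_path finK c0k (ltnW kK)) ek).
- exact: (lt_le_trans uk (entry_le w_path finK kc cK)).
- exact: (le_trans (entry_le w_path finK cK (leqnn K)) eK).
- exact: (timed_blocks w_path finK bc cK).
Qed.
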